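(* Let $\alpha>-1$ and $\beta>0$ be fixed. For every bounded continuous $\Phi:[0,\infty)\to\mathbb{R}$, $\mathcal{R}_{\eta}^{(\alpha,\beta)}(\Phi;x)\to\Phi(x)$ as $\eta\to\infty$, uniformly in $x$ on every compact subset of $[0,\infty)$.
   Context: The generalized Laguerre polynomials are $\mathcal{L}_k^{(\alpha)}(t)=\sum_{i=0}^{k}\frac{(-1)^i}{i!}\binom{k+\alpha}{k-i}t^i$. Put $p_{\eta,k}(x)=e^{-\eta x/2}2^{-\alpha-1}2^{-k}\mathcal{L}_k^{(\alpha)}(-\eta x/2)$ and, for $k\ge1$, $z>0$, $\mathcal{I}_{k,\eta}^{\beta}(z)=\frac{\eta\beta e^{-\eta\beta z}(\eta\beta z)^{k\beta-1}}{\Gamma(k\beta)}$. The operator is $\mathcal{R}_{\eta}^{(\alpha,\beta)}(\Phi;x)=p_{\eta,0}(x)\Phi(0)+\sum_{k=1}^{\infty}p_{\eta,k}(x)\int_0^\infty\mathcal{I}_{k,\eta}^{\beta}(z)\Phi(z)\,dz$, $\eta>0$. *)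

From Stdlib Require Import Reals Arith.
From Coquelicot Require Import Coquelicot.
Open Scope R_scope.

Fixpoint falling (r : R) (n : nat) : R :=
  match n with
  | O => 1
  | S m => falling r m * (r - INR m)
  end.

Definition gbinom (r : R) (n : nat) : R := falling r n / INR (fact n).

Definition laguerre (alpha : R) (k : nat) (t : R) : R :=
  sum_n (fun i => (-1) ^ i / INR (fact i) * gbinom (INR k + alpha) (k - i) * t ^ i) k.

Definition int0inf (f : R -> R) : R :=
  RInt_gen f (at_right 0) (Rbar_locally p_infty).

Definition Gamma (s : R) : R :=
  int0inf (fun t => Rpower t (s - 1) * exp (- t)).

Definition p_eta (alpha eta : R) (k : nat) (x : R) : R :=
  exp (- eta * x / 2) * Rpower 2 (- alpha - 1) * / 2 ^ k
  * laguerre alpha k (- eta * x / 2).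

Definition I_kernel (beta eta : R) (k : nat) (z : R) : R :=
  eta * beta * exp (- eta * beta * z) * Rpower (eta * beta * z) (INR k * beta - 1)
  / Gamma (INR k * beta).

Definition R_op (alpha beta eta : R) (Phi : R -> R) (x : R) : R :=
  p_eta alpha eta 0 x * Phi 0
  + Series (fun j => p_eta alpha eta (S j) x
                     * int0inf (fun z => I_kernel beta eta (S j) z * Phi z)).

(* In k, the weights p_{eta,k}(x) form the law of N + M, where N is Poisson with mean eta x / 2
   and, given N = i, M is negative binomial with parameters (i + alpha + 1, 1/2); for k >= 1 the
   kernel I_{k,eta} is the Gamma density with shape k beta and rate eta beta.  So R_eta is an
   average of Phi against a probability law, and computing the first two moments of both laws
   shows that R_eta((z - x)^2; x) = O(1/eta) uniformly for x in a compact set.  Combined with the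
   modulus |Phi z - Phi x| <= eps + C (z - x)^2 (for x in [0, X] and z >= 0, by uniform
   continuity near [0, X] and boundedness far from it), this gives |R_eta(Phi; x) - Phi x| <= eps + O(1/eta). *)

From Stdlib Require Import Reals Lra Lia Classical_Prop.
From Coquelicot Require Import Coquelicot.
Open Scope R_scope.

(* Coquelicot states equalities of reals at the carrier of [R_NormedModule]; [ring] needs [R]. *)
Ltac eq_R := match goal with |- ?a = ?b => change (@eq R a b) end.

Lemma sum_n_Sn_R (a : nat -> R) n : sum_n a (S n) = sum_n a n + a (S n).
Proof. exact (sum_Sn a n). Qed.

Lemma sum_n_le_R (a b : nat -> R) N :
  (forall i, (i <= N)%nat -> a i <= b i) -> sum_n a N <= sum_n b N.
Proof. intro H. rewrite !sum_n_Reals. now apply sum_Rle. Qed.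

Lemma sum_n_nonneg_R (a : nat -> R) N : (forall i, 0 <= a i) -> 0 <= sum_n a N.
Proof. intro H. rewrite sum_n_Reals. now apply cond_pos_sum. Qed.

Lemma sum_n_incr_R (a : nat -> R) N M :
  (forall i, 0 <= a i) -> (N <= M)%nat -> sum_n a N <= sum_n a M.
Proof.
  intros Ha HNM. induction HNM as [|M _ IH]; [lra|].
  rewrite sum_n_Sn_R. specialize (Ha (S M)). lra.
Qed.

Lemma sum_n_scal_l_R (c : R) (a : nat -> R) N : c * sum_n a N = sum_n (fun i => c * a i) N.
Proof. symmetry. apply (sum_n_mult_l (K := R_Ring)). Qed.

Lemma sum_n_le_series (a : nat -> R) (l : R) N :
  (forall i, 0 <= a i) -> is_series a l -> sum_n a N <= l.
Proof.
  intros Ha Hs. apply (is_lim_seq_incr_compare (sum_n a)); [exact Hs|].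
  intro n. rewrite sum_n_Sn_R. specialize (Ha (S n)). lra.
Qed.

Lemma is_series_nonneg (a : nat -> R) (l : R) : (forall i, 0 <= a i) -> is_series a l -> 0 <= l.
Proof.
  intros Ha Hs. apply Rle_trans with (sum_n a 0); [rewrite sum_O; apply Ha|].
  now apply sum_n_le_series.
Qed.

Lemma is_series_plus_R (a b : nat -> R) (la lb : R) :
  is_series a la -> is_series b lb -> is_series (fun n => a n + b n) (la + lb).
Proof. exact (is_series_plus a b la lb). Qed.

Lemma is_series_scal_R (c : R) (a : nat -> R) (l : R) :
  is_series a l -> is_series (fun n => c * a n) (c * l).
Proof. exact (is_series_scal c a l). Qed.

Lemma is_series_eq_sum (a : nat -> R) (l l' : R) : l = l' -> is_series a l -> is_series a l'.
Proof. now intros ->. Qed.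

Lemma is_series_succ_R (a : nat -> R) (l : R) :
  is_series (fun n => a (S n)) l -> is_series a (l + a 0%nat).
Proof.
  intro H. apply is_series_decr_1. eapply is_series_eq_sum; [|exact H].
  change (@eq R l (l + a 0%nat + - a 0%nat)). ring.
Qed.

Lemma is_series_pred_R (a : nat -> R) (l : R) :
  is_series a l -> is_series (fun n => a (S n)) (l - a 0%nat).
Proof.
  intro H. apply is_series_incr_1. eapply is_series_eq_sum; [|exact H].
  change (@eq R l (l - a 0%nat + a 0%nat)). ring.
Qed.

(** * Moments of a sequence satisfying a shift relation *)

Section ShiftMoments.
Variables (p q : nat -> R) (c : R).
Hypothesis shift : forall j, INR (S j) * p (S j) = c * q j.

Lemma is_series_mean_of_shift (lq : R) :
  is_series q lq -> is_series (fun j => INR j * p j) (c * lq).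
Proof.
  intro Hq. apply (is_series_eq_sum _ (c * lq + INR 0 * p 0%nat)); [simpl; ring|].
  apply is_series_succ_R. apply (is_series_ext (fun j => c * q j)).
  - intro j. now rewrite shift.
  - now apply is_series_scal_R.
Qed.

Lemma is_series_second_moment_of_shift (lq mq : R) :
  is_series q lq -> is_series (fun j => INR j * q j) mq ->
  is_series (fun j => INR j * INR j * p j) (c * (mq + lq)).
Proof.
  intros Hq Hmq. apply (is_series_eq_sum _ (c * (mq + lq) + INR 0 * INR 0 * p 0%nat));
    [simpl; ring|].
  apply is_series_succ_R. apply (is_series_ext (fun j => c * (INR j * q j + q j))).
  - intro j. eq_R. rewrite (Rmult_assoc (INR (S j))), shift, S_INR. ring.
  - now apply is_series_scal_R, is_series_plus_R.
Qed.

End ShiftMoments.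

(** * The negative binomial distribution with parameter 1/2 *)

Lemma falling_S_shift y n : falling y (S n) = y * falling (y - 1) n.
Proof.
  revert y; induction n as [|n IH]; intro y; [simpl; ring|].
  change (falling y (S n) * (y - INR (S n)) = y * (falling (y - 1) n * (y - 1 - INR n))).
  rewrite IH, S_INR. ring.
Qed.

Lemma falling_pos y n : INR n - 1 < y -> 0 < falling y n.
Proof.
  induction n as [|n IH]; intro H; simpl; [lra|].
  rewrite S_INR in H. apply Rmult_lt_0_compat; [apply IH|]; lra.
Qed.

(* binom(r + j - 1, j), the coefficient of w^j in (1 - w)^(-r) *)
Definition negbin (r : R) (j : nat) : R := gbinom (r + INR j - 1) j.

Lemma negbin_0 r : negbin r 0 = 1.
Proof. unfold negbin, gbinom; simpl. field. Qed.

Lemma negbin_pos r j : 0 < r -> 0 < negbin r j.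
Proof.
  intro Hr. apply Rdiv_lt_0_compat; [apply falling_pos; lra | apply INR_fact_lt_0].
Qed.

Lemma negbin_S r j : INR (S j) * negbin r (S j) = (r + INR j) * negbin r j.
Proof.
  unfold negbin, gbinom. rewrite falling_S_shift, fact_simpl, mult_INR, !S_INR.
  replace (r + (INR j + 1) - 1 - 1) with (r + INR j - 1) by ring.
  replace (r + (INR j + 1) - 1) with (r + INR j) by ring.
  assert (INR (Factorial.fact j) <> 0) by apply INR_fact_neq_0.
  assert (INR j + 1 <> 0) by (rewrite <- S_INR; apply not_0_INR; lia).
  field. split; assumption.
Qed.

Lemma negbin_S_shift r j : INR (S j) * negbin r (S j) = r * negbin (r + 1) j.
Proof.
  unfold negbin, gbinom. rewrite fact_simpl, mult_INR.
  replace (r + INR (S j) - 1) with (r + 1 + INR j - 1) by (rewrite S_INR; ring).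
  change (falling (r + 1 + INR j - 1) (S j)) with
    (falling (r + 1 + INR j - 1) j * (r + 1 + INR j - 1 - INR j)).
  assert (INR (Factorial.fact j) <> 0) by apply INR_fact_neq_0.
  assert (INR (S j) <> 0) by (apply not_0_INR; lia).
  field. split; assumption.
Qed.

Definition negbin_sum (r w : R) (N : nat) : R := sum_n (fun j => negbin r j * w ^ j) N.

Definition negbin_sum' (r w : R) (N : nat) : R :=
  sum_n (fun j => INR j * negbin r j * w ^ pred j) N.

Lemma is_derive_negbin_sum r w N : is_derive (fun w => negbin_sum r w N) w (negbin_sum' r w N).
Proof.
  apply (is_derive_sum_n (V := R_NormedModule)). intros j _.
  auto_derive; [exact I|]. ring.
Qed.

(* The partial sums satisfy the ODE (1 - w) S' = r S of (1 - w)^(-r) up to one term. *)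
Lemma negbin_sum_ode r w N :
  (1 - w) * negbin_sum' r w N - r * negbin_sum r w N = - ((r + INR N) * negbin r N * w ^ N).
Proof.
  unfold negbin_sum, negbin_sum'. induction N as [|N IH].
  - rewrite !sum_O, negbin_0. simpl. ring.
  - rewrite !sum_n_Sn_R.
    transitivity ((1 - w) * sum_n (fun j => INR j * negbin r j * w ^ pred j) N
                  - r * sum_n (fun j => negbin r j * w ^ j) N
                  + ((1 - w) * (INR (S N) * negbin r (S N)) * w ^ N
                     - r * negbin r (S N) * w ^ S N)); [simpl pred; ring|].
    rewrite IH, <- negbin_S, !S_INR. simpl pow. ring.
Qed.

Lemma negbin_sum_0 r N : negbin_sum r 0 N = 1.
Proof.
  unfold negbin_sum. induction N as [|N IH].
  - rewrite sum_O, negbin_0. simpl. ring.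
  - rewrite sum_n_Sn_R, IH. simpl. ring.
Qed.

Definition negbin_normalized_sum (r : R) (N : nat) (w : R) : R :=
  exp (r * ln (1 - w)) * negbin_sum r w N.

Lemma is_derive_negbin_normalized_sum r N w : w < 1 ->
  is_derive (negbin_normalized_sum r N) w
    (exp (r * ln (1 - w)) / (1 - w) * - ((r + INR N) * negbin r N * w ^ N)).
Proof.
  intro Hw. rewrite <- negbin_sum_ode.
  evar (d : R).
  assert (Hd : is_derive (fun w => exp (r * ln (1 - w))) w d) by (auto_derive; [lra | unfold d; reflexivity]).
  replace (exp (r * ln (1 - w)) / (1 - w) * ((1 - w) * negbin_sum' r w N - r * negbin_sum r w N))
    with (d * negbin_sum r w N + exp (r * ln (1 - w)) * negbin_sum' r w N)
    by (unfold d; replace (1 + - w) with (1 - w) by ring; field; lra).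
  apply (is_derive_mult (fun w => exp (r * ln (1 - w))) (fun w => negbin_sum r w N));
    [exact Hd | apply is_derive_negbin_sum | intros; apply Rmult_comm].
Qed.

Lemma exp_le_compat x y : x <= y -> exp x <= exp y.
Proof. intros [H | ->]; [left; now apply exp_increasing | lra]. Qed.

Lemma exp_le_1 x : x <= 0 -> exp x <= 1.
Proof. intro Hx. rewrite <- exp_0. now apply exp_le_compat. Qed.

(* Mean value theorem on [0, 1/2], where (1 - c)^(r - 1) <= 2. *)
Lemma negbin_normalized_sum_error r N : 0 < r ->
  Rabs (negbin_normalized_sum r N (/2) - 1) <= (r + INR N) * negbin r N * (/2) ^ N.
Proof.
  intro Hr.
  destruct (MVT_gen (negbin_normalized_sum r N) 0 (/2)
     (fun w => exp (r * ln (1 - w)) / (1 - w) * - ((r + INR N) * negbin r N * w ^ N)))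
    as [c [Hc Heq]].
  - intros x Hx. rewrite Rmax_right in Hx by lra. apply is_derive_negbin_normalized_sum. lra.
  - intros x Hx. rewrite Rmax_right in Hx by lra. apply continuity_pt_filterlim.
    apply (ex_derive_continuous (V := R_NormedModule)).
    eexists. apply is_derive_negbin_normalized_sum. lra.
  - rewrite Rmin_left, Rmax_right in Hc by lra.
    replace (negbin_normalized_sum r N 0) with 1 in Heq
      by (unfold negbin_normalized_sum; rewrite negbin_sum_0, Rminus_0_r, ln_1, Rmult_0_r, exp_0; ring).
    rewrite Heq.
    set (A := (r + INR N) * negbin r N).
    assert (HA : 0 <= A) by (pose proof (negbin_pos r N Hr); pose proof (pos_INR N); unfold A; nra).
    set (E := exp (r * ln (1 - c))).
    assert (HE1 : E <= 1).
    { apply exp_le_1. assert (ln (1 - c) <= 0) by (rewrite <- ln_1; apply ln_le; lra). nra. }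
    assert (HE0 : 0 < E) by apply exp_pos.
    assert (Hcn : 0 <= c ^ N <= (/2) ^ N) by (split; [apply pow_le | apply pow_incr]; lra).
    assert (HE2 : E / (1 - c) <= 2).
    { apply (Rmult_le_reg_r (1 - c)); [lra|]. unfold Rdiv. rewrite Rmult_assoc, Rinv_l; lra. }
    assert (HE2' : 0 <= E / (1 - c)) by (apply Rdiv_le_0_compat; lra).
    rewrite Rminus_0_r, !Rabs_mult, Rabs_Ropp, Rabs_mult, !Rabs_pos_eq by lra.
    replace (A * (/2) ^ N) with (2 * (A * (/2) ^ N) * /2) by field.
    apply Rmult_le_compat_r; [lra|]. apply Rmult_le_compat; try nra.
Qed.

Lemma is_lim_seq_inv_S : is_lim_seq (fun n => / INR (S n)) 0.
Proof.
  apply (is_lim_seq_incr_1 (fun n => / INR n)).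
  replace (Finite 0) with (Rbar_inv p_infty) by reflexivity.
  apply is_lim_seq_inv; [apply is_lim_seq_INR | discriminate].
Qed.

(* The bound of the previous lemma is the general term of a convergent series (ratio 1/2). *)
Lemma is_lim_seq_negbin_error r : 0 < r ->
  is_lim_seq (fun N => (r + INR N) * negbin r N * (/2) ^ N) 0.
Proof.
  intro Hr.
  assert (Hpos : forall n, 0 < (r + INR n) * negbin r n * (/2) ^ n).
  { intro n. pose proof (negbin_pos r n Hr). pose proof (pos_INR n).
    pose proof (pow_lt (/2) n ltac:(lra)).
    apply Rmult_lt_0_compat; [apply Rmult_lt_0_compat|]; lra. }
  apply ex_series_lim_0, ex_series_Rabs, (ex_series_DAlembert _ (/2));
    [lra | intro n; apply Rgt_not_eq, Hpos |].
  - apply (is_lim_seq_ext (fun n => /2 + r / 2 * / INR (S n))).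
    + intro n. rewrite Rabs_pos_eq by (left; apply Rdiv_lt_0_compat; apply Hpos).
      pose proof (Hpos n). pose proof (negbin_pos r n Hr). pose proof (pos_INR n).
      pose proof (pow_lt (/2) n ltac:(lra)).
      assert (HS : INR (S n) <> 0) by (apply not_0_INR; lia).
      assert (Hc : negbin r (S n) = (r + INR n) * negbin r n / INR (S n))
        by (rewrite <- negbin_S; field; exact HS).
      rewrite Hc, S_INR. rewrite S_INR in HS. simpl pow. field. repeat split; lra.
    + replace (Finite (/2)) with (Finite (/2 + r / 2 * 0)) by (f_equal; ring).
      apply (is_lim_seq_plus' (fun _ => /2)); [apply is_lim_seq_const|].
      apply (is_lim_seq_scal_l _ (r / 2) 0), is_lim_seq_inv_S.
Qed.

Lemma is_series_negbin_half r : 0 < r -> is_series (fun j => negbin r j * (/2) ^ j) (Rpower 2 r).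
Proof.
  intro Hr.
  assert (Hg : is_lim_seq (fun N => negbin_normalized_sum r N (/2)) 1).
  { apply (is_lim_seq_le_le (fun N => 1 - (r + INR N) * negbin r N * (/2) ^ N) _
            (fun N => 1 + (r + INR N) * negbin r N * (/2) ^ N)).
    - intro N. pose proof (negbin_normalized_sum_error r N Hr) as H.
      apply Rabs_le_between in H. lra.
    - replace (Finite 1) with (Finite (1 - 0)) by (f_equal; ring).
      apply (is_lim_seq_minus' (fun _ => 1)); [apply is_lim_seq_const | now apply is_lim_seq_negbin_error].
    - replace (Finite 1) with (Finite (1 + 0)) by (f_equal; ring).
      apply (is_lim_seq_plus' (fun _ => 1)); [apply is_lim_seq_const | now apply is_lim_seq_negbin_error]. }
  assert (Hg' : is_lim_seq (fun N => Rpower 2 r * negbin_normalized_sum r N (/2)) (Rpower 2 r * 1))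
    by exact (is_lim_seq_scal_l _ (Rpower 2 r) 1 Hg).
  rewrite Rmult_1_r in Hg'.
  apply (is_lim_seq_ext _ (sum_n (fun j => negbin r j * (/2) ^ j))) in Hg'; [exact Hg'|].
  intro N. unfold negbin_normalized_sum, Rpower. fold (negbin_sum r (/2) N).
  rewrite <- Rmult_assoc, <- exp_plus.
  replace (1 - /2) with (/2) by field. rewrite ln_Rinv by lra.
  replace (r * ln 2 + r * - ln 2) with 0 by ring. rewrite exp_0. ring.
Qed.

Definition negbin_pmf (r : R) (j : nat) : R := Rpower 2 (- r) * (negbin r j * (/2) ^ j).

Lemma negbin_pmf_nonneg r j : 0 < r -> 0 <= negbin_pmf r j.
Proof.
  intro Hr. apply Rmult_le_pos; [left; apply exp_pos|].
  apply Rmult_le_pos; [left; now apply negbin_pos | apply pow_le; lra].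
Qed.

Lemma negbin_pmf_S_shift r j : INR (S j) * negbin_pmf r (S j) = r * negbin_pmf (r + 1) j.
Proof.
  unfold negbin_pmf.
  transitivity (Rpower 2 (- r) * (INR (S j) * negbin r (S j)) * (/2) ^ S j); [ring|].
  rewrite negbin_S_shift, !Rpower_Ropp, Rpower_plus, Rpower_1 by lra.
  simpl pow. field. apply Rgt_not_eq, exp_pos.
Qed.

Lemma is_series_negbin_pmf r : 0 < r -> is_series (negbin_pmf r) 1.
Proof.
  intro Hr. apply (is_series_eq_sum _ (Rpower 2 (- r) * Rpower 2 r)).
  - rewrite <- Rpower_plus, Rplus_opp_l. apply Rpower_O. lra.
  - now apply is_series_scal_R, is_series_negbin_half.
Qed.

Lemma is_series_negbin_pmf_mean r : 0 < r -> is_series (fun j => INR j * negbin_pmf r j) r.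
Proof.
  intro Hr. apply (is_series_eq_sum _ (r * 1)); [ring|].
  apply (is_series_mean_of_shift _ (negbin_pmf (r + 1))); [apply negbin_pmf_S_shift|].
  apply is_series_negbin_pmf. lra.
Qed.

Lemma is_series_negbin_pmf_second_moment r : 0 < r ->
  is_series (fun j => INR j * INR j * negbin_pmf r j) (r * r + 2 * r).
Proof.
  intro Hr. apply (is_series_eq_sum _ (r * ((r + 1) + 1))); [ring|].
  apply (is_series_second_moment_of_shift _ (negbin_pmf (r + 1))); [apply negbin_pmf_S_shift|..].
  - apply is_series_negbin_pmf. lra.
  - apply is_series_negbin_pmf_mean. lra.
Qed.

(** * The Poisson distribution *)

Definition poisson_pmf (s : R) (i : nat) : R := exp (- s) * (s ^ i / INR (Factorial.fact i)).

Lemma poisson_pmf_nonneg s i : 0 <= s -> 0 <= poisson_pmf s i.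
Proof.
  intro Hs. apply Rmult_le_pos; [left; apply exp_pos|].
  apply Rdiv_le_0_compat; [apply pow_le; lra | apply INR_fact_lt_0].
Qed.

Lemma poisson_pmf_S_shift s i : INR (S i) * poisson_pmf s (S i) = s * poisson_pmf s i.
Proof.
  unfold poisson_pmf. rewrite fact_simpl, mult_INR. simpl pow.
  assert (INR (Factorial.fact i) <> 0) by apply INR_fact_neq_0.
  assert (INR (S i) <> 0) by (apply not_0_INR; lia).
  field. split; assumption.
Qed.

Lemma is_series_poisson_pmf s : is_series (poisson_pmf s) 1.
Proof.
  pose proof (is_exp_Reals s) as H. apply is_pseries_R in H.
  apply (is_series_eq_sum _ (exp (- s) * exp s)); [rewrite <- exp_plus, Rplus_opp_l; apply exp_0|].
  apply (is_series_ext (fun n => exp (- s) * (/ INR (Factorial.fact n) * s ^ n))).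
  - intro n. unfold poisson_pmf. eq_R. field. apply INR_fact_neq_0.
  - now apply is_series_scal_R.
Qed.

Lemma is_series_poisson_pmf_mean s : is_series (fun i => INR i * poisson_pmf s i) s.
Proof.
  apply (is_series_eq_sum _ (s * 1)); [ring|].
  apply (is_series_mean_of_shift _ (poisson_pmf s)); [apply poisson_pmf_S_shift|].
  apply is_series_poisson_pmf.
Qed.

Lemma is_series_poisson_pmf_second_moment s :
  is_series (fun i => INR i * INR i * poisson_pmf s i) (s * s + s).
Proof.
  apply (is_series_eq_sum _ (s * (s + 1))); [ring|].
  apply (is_series_second_moment_of_shift _ (poisson_pmf s)); [apply poisson_pmf_S_shift|..].
  - apply is_series_poisson_pmf.
  - apply is_series_poisson_pmf_mean.
Qed.

(** * Summing a nonnegative double series along anti-diagonals *)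

Lemma sum_n_antidiag (F : nat -> nat -> R) N :
  sum_n (fun k => sum_n (fun i => F i (k - i)%nat) k) N
  = sum_n (fun i => sum_n (F i) (N - i)) N.
Proof.
  induction N as [|N IH]; [now rewrite !sum_O|].
  rewrite sum_n_Sn_R, IH, !(sum_n_Sn_R _ N), Nat.sub_diag, sum_O.
  rewrite (sum_n_ext_loc (fun i => sum_n (F i) (S N - i))
             (fun i => sum_n (F i) (N - i) + F i (S N - i)%nat)).
  - rewrite (sum_n_plus (G := R_AbelianMonoid)). change plus with Rplus. eq_R. ring.
  - intros i Hi. replace (S N - i)%nat with (S (N - i)) by lia. apply sum_n_Sn_R.
Qed.

Lemma is_lim_seq_sum_n (G : nat -> nat -> R) (l : nat -> R) I :
  (forall i, is_lim_seq (G i) (l i)) ->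
  is_lim_seq (fun J => sum_n (fun i => G i J) I) (sum_n l I).
Proof.
  intro H. induction I as [|I IH].
  - rewrite sum_O. apply (is_lim_seq_ext (G 0%nat)); [intro; now rewrite sum_O | apply H].
  - rewrite sum_n_Sn_R. apply (is_lim_seq_ext (fun J => sum_n (fun i => G i J) I + G (S I) J)).
    + intro. now rewrite sum_n_Sn_R.
    + now apply is_lim_seq_plus'.
Qed.

(* The anti-diagonal partial sums are squeezed between the rectangle sums, which tend to [S]. *)
Lemma is_series_antidiag (F : nat -> nat -> R) (r : nat -> R) (S : R) :
  (forall i j, 0 <= F i j) -> (forall i, is_series (F i) (r i)) -> is_series r S ->
  is_series (fun k => sum_n (fun i => F i (k - i)%nat) k) S.
Proof.
  intros HF Hr HS.
  set (T N := sum_n (fun i => sum_n (F i) (N - i)) N).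
  assert (HFk : forall k, 0 <= sum_n (fun i => F i (k - i)%nat) k)
    by (intro k; apply sum_n_nonneg_R; intro; apply HF).
  assert (Hup : forall N, T N <= S).
  { intro N. apply Rle_trans with (sum_n r N); [|apply sum_n_le_series; auto].
    - apply sum_n_le_R. intros i _. apply sum_n_le_series; auto.
    - intro i. apply (is_series_nonneg (F i)); auto. }
  assert (Hmono : forall N M, (N <= M)%nat -> T N <= T M)
    by (intros N M H; unfold T; rewrite <- !sum_n_antidiag; now apply sum_n_incr_R).
  assert (Hlow : forall I J, sum_n (fun i => sum_n (F i) J) I <= T (I + J)%nat).
  { intros I J. apply Rle_trans with (sum_n (fun i => sum_n (F i) (I + J - i)) I).
    - apply sum_n_le_R. intros i Hi. apply sum_n_incr_R; auto. lia.
    - apply sum_n_incr_R; [intro i; apply sum_n_nonneg_R; auto | lia]. }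
  unfold is_series. change (is_lim_seq (sum_n (fun k => sum_n (fun i => F i (k - i)%nat) k)) S).
  apply (is_lim_seq_ext T); [intro; symmetry; apply sum_n_antidiag|].
  apply is_lim_seq_spec. intro eps.
  assert (HSlim : is_lim_seq (sum_n r) S) by exact HS.
  apply is_lim_seq_spec in HSlim. destruct (HSlim (pos_div_2 eps)) as [I HI].
  specialize (HI I (le_n I)).
  assert (HG : is_lim_seq (fun J => sum_n (fun i => sum_n (F i) J) I) (sum_n r I))
    by (apply (is_lim_seq_sum_n (fun i J => sum_n (F i) J)); exact Hr).
  apply is_lim_seq_spec in HG. destruct (HG (pos_div_2 eps)) as [J HJ].
  specialize (HJ J (le_n J)).
  exists (I + J)%nat. intros N HN.
  pose proof (Hlow I J). pose proof (Hmono _ _ HN). pose proof (Hup N).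
  apply Rabs_lt_between in HI. apply Rabs_lt_between in HJ.
  apply Rabs_lt_between. destruct eps as [e He]. simpl in *. lra.
Qed.

Lemma is_series_antidiag_weighted (F : nat -> nat -> R) (g r : nat -> R) (S : R) :
  (forall i j, 0 <= F i j) -> (forall n, 0 <= g n) ->
  (forall i, is_series (fun j => F i j * g (i + j)%nat) (r i)) -> is_series r S ->
  is_series (fun k => g k * sum_n (fun i => F i (k - i)%nat) k) S.
Proof.
  intros HF Hg Hi HS.
  apply (is_series_ext (fun k => sum_n (fun i => F i (k - i)%nat * g (i + (k - i))%nat) k)).
  - intro k. rewrite sum_n_scal_l_R. apply sum_n_ext_loc. intros i Hik.
    replace (i + (k - i))%nat with k by lia. eq_R. ring.
  - apply (is_series_antidiag (fun i j => F i j * g (i + j)%nat) r); auto.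
    intros; apply Rmult_le_pos; auto.
Qed.

(** * The weights [p_eta] form a Poisson mixture of negative binomial laws *)

Definition poisson_negbin_pmf (alpha s : R) (k : nat) : R :=
  sum_n (fun i => poisson_pmf s i * negbin_pmf (INR i + alpha + 1) (k - i)) k.

Lemma pow_opp_sign s i : (-1) ^ i * (- s) ^ i = s ^ i.
Proof. rewrite <- Rpow_mult_distr. f_equal. ring. Qed.

Lemma p_eta_poisson_negbin alpha eta x k :
  p_eta alpha eta k x = poisson_negbin_pmf alpha (eta * x / 2) k.
Proof.
  unfold p_eta, laguerre, poisson_negbin_pmf.
  set (s := eta * x / 2).
  replace (- eta * x / 2) with (- s) by (unfold s; field).
  rewrite sum_n_scal_l_R. apply sum_n_ext_loc. intros i Hi.
  unfold poisson_pmf, negbin_pmf.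
  replace (gbinom (INR k + alpha) (k - i)) with (negbin (INR i + alpha + 1) (k - i))
    by (unfold negbin; f_equal; rewrite minus_INR by lia; ring).
  replace (- (INR i + alpha + 1)) with ((- alpha - 1) + - INR i) by ring.
  rewrite Rpower_plus, Rpower_Ropp, Rpower_pow, pow_inv by lra.
  replace ((-1) ^ i / INR (Factorial.fact i) * negbin (INR i + alpha + 1) (k - i) * (- s) ^ i)
    with (s ^ i / INR (Factorial.fact i) * negbin (INR i + alpha + 1) (k - i))
    by (rewrite <- (pow_opp_sign s i); field; apply INR_fact_neq_0).
  replace (2 ^ k) with (2 ^ i * 2 ^ (k - i)) by (rewrite <- pow_add; f_equal; lia).
  pose proof (pow_lt 2 i ltac:(lra)). pose proof (pow_lt 2 (k - i) ltac:(lra)).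
  eq_R. field. repeat split; try lra. apply INR_fact_neq_0.
Qed.

Section PoissonNegbinMoments.
Variables (alpha s : R).
Hypotheses (Halpha : -1 < alpha) (Hs : 0 <= s).

Let F (i j : nat) := poisson_pmf s i * negbin_pmf (INR i + alpha + 1) j.

Lemma negbin_parameter_pos i : 0 < INR i + alpha + 1.
Proof. pose proof (pos_INR i). lra. Qed.

Let F_nonneg i j : 0 <= F i j.
Proof.
  apply Rmult_le_pos; [now apply poisson_pmf_nonneg|].
  apply negbin_pmf_nonneg, negbin_parameter_pos.
Qed.

Lemma poisson_negbin_pmf_nonneg k : 0 <= poisson_negbin_pmf alpha s k.
Proof. apply sum_n_nonneg_R. intro; apply F_nonneg. Qed.

Lemma is_series_poisson_negbin_pmf : is_series (poisson_negbin_pmf alpha s) 1.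
Proof.
  apply (is_series_ext (fun k => 1 * poisson_negbin_pmf alpha s k)); [intro; eq_R; ring|].
  apply (is_series_antidiag_weighted F (fun _ => 1) (poisson_pmf s)); [exact F_nonneg | intro; lra | |].
  - intro i. apply (is_series_eq_sum _ (poisson_pmf s i * 1)); [ring|].
    apply (is_series_ext (fun j => poisson_pmf s i * negbin_pmf (INR i + alpha + 1) j));
      [intro; unfold F; eq_R; ring|].
    apply is_series_scal_R, is_series_negbin_pmf, negbin_parameter_pos.
  - apply is_series_poisson_pmf.
Qed.

Lemma is_series_poisson_negbin_pmf_mean :
  is_series (fun k => INR k * poisson_negbin_pmf alpha s k) (2 * s + alpha + 1).
Proof.
  apply (is_series_antidiag_weighted F INR
    (fun i => 2 * (INR i * poisson_pmf s i) + (alpha + 1) * poisson_pmf s i));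
    [exact F_nonneg | exact pos_INR | |].
  - intro i. set (r := INR i + alpha + 1).
    apply (is_series_eq_sum _ (poisson_pmf s i * (INR i * 1 + r))); [unfold r; ring|].
    apply (is_series_ext (fun j => poisson_pmf s i * (INR i * negbin_pmf r j + INR j * negbin_pmf r j))).
    { intro j. unfold F. fold r. rewrite plus_INR. eq_R. ring. }
    apply is_series_scal_R, is_series_plus_R.
    + apply is_series_scal_R, is_series_negbin_pmf, negbin_parameter_pos.
    + apply is_series_negbin_pmf_mean, negbin_parameter_pos.
  - apply (is_series_eq_sum _ (2 * s + (alpha + 1) * 1)); [ring|].
    apply is_series_plus_R; apply is_series_scal_R;
      [apply is_series_poisson_pmf_mean | apply is_series_poisson_pmf].
Qed.

Lemma is_series_poisson_negbin_pmf_second_moment :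
  is_series (fun k => INR k * INR k * poisson_negbin_pmf alpha s k)
    (4 * s * s + (4 * alpha + 10) * s + (alpha + 1) * (alpha + 3)).
Proof.
  apply (is_series_antidiag_weighted F (fun k => INR k * INR k)
     (fun i => 4 * (INR i * INR i * poisson_pmf s i) + (4 * alpha + 6) * (INR i * poisson_pmf s i)
               + (alpha + 1) * (alpha + 3) * poisson_pmf s i));
    [exact F_nonneg | intro n; pose proof (pos_INR n); nra | |].
  - intro i. set (r := INR i + alpha + 1).
    apply (is_series_eq_sum _
      (poisson_pmf s i * (INR i * INR i * 1 + 2 * INR i * r + (r * r + 2 * r)))); [unfold r; ring|].
    apply (is_series_ext (fun j => poisson_pmf s i * (INR i * INR i * negbin_pmf r j
          + 2 * INR i * (INR j * negbin_pmf r j) + INR j * INR j * negbin_pmf r j))).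
    { intro j. unfold F. fold r. rewrite plus_INR. eq_R. ring. }
    apply is_series_scal_R, is_series_plus_R; [apply is_series_plus_R|].
    + apply is_series_scal_R, is_series_negbin_pmf, negbin_parameter_pos.
    + apply is_series_scal_R, is_series_negbin_pmf_mean, negbin_parameter_pos.
    + apply is_series_negbin_pmf_second_moment, negbin_parameter_pos.
  - apply (is_series_eq_sum _ (4 * (s * s + s) + (4 * alpha + 6) * s + (alpha + 1) * (alpha + 3) * 1));
      [ring|].
    apply is_series_plus_R; [apply is_series_plus_R|]; apply is_series_scal_R;
      [apply is_series_poisson_pmf_second_moment | apply is_series_poisson_pmf_mean
      | apply is_series_poisson_pmf].
Qed.

End PoissonNegbinMoments.

(** * Improper integrals over (0, +oo) *)

Definition is_int0inf (f : R -> R) (l : R) : Prop :=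
  is_RInt_gen f (at_right 0) (Rbar_locally p_infty) l.

Definition continuous_pos (f : R -> R) : Prop := forall t, 0 < t -> continuous f t.

Lemma ball_R_iff (x e y : R) : ball x e y <-> Rabs (y - x) < e.
Proof. reflexivity. Qed.

Lemma at_right_0_intro (P : R -> Prop) d : 0 < d -> (forall y, 0 < y < d -> P y) -> at_right 0 P.
Proof.
  intros Hd H. exists (mkposreal d Hd). intros y Hy Hy0. apply H.
  change (Rabs (y - 0) < d) in Hy. rewrite Rminus_0_r, Rabs_pos_eq in Hy; lra.
Qed.

Lemma at_right_0_elim (P : R -> Prop) : at_right 0 P -> exists d, 0 < d /\ forall y, 0 < y < d -> P y.
Proof.
  intros [e He]. exists e. split; [apply cond_pos|]. intros y Hy. apply He; [|lra].
  apply ball_R_iff. rewrite Rminus_0_r, Rabs_pos_eq; lra.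
Qed.

Lemma filter_prod_int0inf (P : R * R -> Prop) :
  (forall a b, 0 < a < 1 -> 1 < b -> P (a, b)) -> filter_prod (at_right 0) (Rbar_locally p_infty) P.
Proof.
  intro H. apply (Filter_prod _ _ _ (fun a => 0 < a < 1) (fun b => 1 < b)); [| now exists 1 | auto].
  apply (at_right_0_intro _ 1); auto; lra.
Qed.

Lemma ex_RInt_pos (f : R -> R) u v : continuous_pos f -> 0 < u -> u <= v -> ex_RInt f u v.
Proof.
  intros Hf Hu Huv. apply (ex_RInt_continuous (V := R_CompleteNormedModule)). intros z Hz.
  rewrite Rmin_left in Hz by lra. apply Hf. lra.
Qed.

Lemma RInt_Chasles_pos (f : R -> R) a b c : continuous_pos f -> 0 < a -> a <= b -> b <= c ->
  RInt f a c = RInt f a b + RInt f b c.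
Proof.
  intros Hf Ha Hab Hbc. symmetry. apply (RInt_Chasles f a b c); apply ex_RInt_pos; auto; lra.
Qed.

Section NonnegIntegrand.
Variable h : R -> R.
Hypotheses (h_cont : continuous_pos h) (h_nonneg : forall t, 0 < t -> 0 <= h t).

Lemma RInt_nonneg_pos u v : 0 < u -> u <= v -> 0 <= RInt h u v.
Proof.
  intros Hu Huv. apply RInt_ge_0; auto; [now apply ex_RInt_pos|].
  intros x Hx. apply h_nonneg. lra.
Qed.

Lemma RInt_le_superinterval a u v b : 0 < a -> a <= u -> u <= v -> v <= b ->
  RInt h u v <= RInt h a b.
Proof.
  intros Ha Hau Huv Hvb.
  rewrite (RInt_Chasles_pos h a u b), (RInt_Chasles_pos h u v b) by (auto; lra).
  pose proof (RInt_nonneg_pos a u Ha Hau). pose proof (RInt_nonneg_pos v b ltac:(lra) Hvb). lra.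
Qed.

(* The improper integral is the supremum of the integrals over compact subintervals. *)
Lemma ex_int0inf_of_bounded_RInt C :
  (forall u v, 0 < u -> u < v -> RInt h u v <= C) -> exists l, is_int0inf h l.
Proof.
  intro HC.
  set (E := fun y => exists u v, 0 < u /\ u < v /\ y = RInt h u v).
  destruct (completeness E) as [m [Hub Hlub]].
  { exists C. intros y [u [v [Hu [Huv ->]]]]. now apply HC. }
  { exists (RInt h 1 2), 1, 2. repeat split; lra. }
  exists m. intros P [eps Heps].
  assert (Hex : exists u0 v0, 0 < u0 /\ u0 < v0 /\ m - eps < RInt h u0 v0).
  { apply NNPP. intro H.
    assert (Hb : is_upper_bound E (m - eps)).
    { intros y [u [v [Hu [Huv ->]]]]. apply Rnot_lt_le. intro Hl. apply H. now exists u, v. }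
    specialize (Hlub _ Hb). destruct eps as [e He]; simpl in *. lra. }
  destruct Hex as [u0 [v0 [Hu0 [Huv0 Hm]]]].
  apply (Filter_prod _ _ _ (fun a => 0 < a < u0) (fun b => v0 < b));
    [apply (at_right_0_intro _ u0); auto | now exists v0 |].
  intros a b Ha Hb. exists (RInt h a b). split.
  - apply (RInt_correct (V := R_CompleteNormedModule)). apply ex_RInt_pos; auto; lra.
  - apply Heps, ball_R_iff.
    assert (RInt h a b <= m) by (apply Hub; exists a, b; repeat split; lra).
    assert (RInt h u0 v0 <= RInt h a b) by (apply RInt_le_superinterval; lra).
    apply Rabs_lt_between. destruct eps as [e He]; simpl in *. lra.
Qed.

Lemma RInt_le_int0inf L u v : is_int0inf h L -> 0 < u -> u < v -> RInt h u v <= L.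
Proof.
  intros HL Hu Huv. apply Rnot_lt_le. intro Hlt.
  set (e := RInt h u v - L).
  assert (He : 0 < e) by (unfold e; lra).
  destruct (HL (fun y => Rabs (y - L) < e)) as [Q Q' HQ HQ' HQQ']; [now exists (mkposreal e He)|].
  destruct (at_right_0_elim _ HQ) as [d [Hd HQd]].
  destruct HQ' as [M HM].
  set (a := Rmin u d / 2). set (b := Rmax v M + 1).
  assert (Ha : 0 < a /\ a < u /\ a < d).
  { pose proof (Rmin_l u d). pose proof (Rmin_r u d). pose proof (Rmin_glb_lt u d 0). unfold a. lra. }
  assert (Hb : v < b /\ M < b) by (pose proof (Rmax_l v M); pose proof (Rmax_r v M); unfold b; lra).
  destruct (HQQ' a b) as [y [Hy1 Hy2]]; [apply HQd; lra | apply HM; lra|].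
  apply (is_RInt_unique (V := R_CompleteNormedModule)) in Hy1. simpl in Hy1.
  assert (RInt h u v <= RInt h a b) by (apply RInt_le_superinterval; lra).
  simpl in Hy2. rewrite <- Hy1 in Hy2. apply Rabs_lt_between in Hy2. unfold e in *. lra.
Qed.

End NonnegIntegrand.

Lemma int0inf_unique f l : is_int0inf f l -> int0inf f = l.
Proof. apply (is_RInt_gen_unique (V := R_CompleteNormedModule)). Qed.

Lemma is_int0inf_ext f g l : (forall t, 0 < t -> f t = g t) -> is_int0inf f l -> is_int0inf g l.
Proof.
  intros Hfg. apply (is_RInt_gen_ext f). apply filter_prod_int0inf.
  intros a b Ha Hb t Ht. simpl in Ht. apply Hfg.
  pose proof (Rmin_glb_lt a b 0). lra.
Qed.

Lemma is_int0inf_eq f l l' : l = l' -> is_int0inf f l -> is_int0inf f l'.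
Proof. now intros ->. Qed.

Lemma is_int0inf_plus f g lf lg :
  is_int0inf f lf -> is_int0inf g lg -> is_int0inf (fun t => f t + g t) (lf + lg).
Proof. exact (is_RInt_gen_plus (V := R_NormedModule) f g lf lg). Qed.

Lemma is_int0inf_minus f g lf lg :
  is_int0inf f lf -> is_int0inf g lg -> is_int0inf (fun t => f t - g t) (lf - lg).
Proof. exact (is_RInt_gen_minus (V := R_NormedModule) f g lf lg). Qed.

Lemma is_int0inf_scal c f l : is_int0inf f l -> is_int0inf (fun t => c * f t) (c * l).
Proof. exact (is_RInt_gen_scal (V := R_NormedModule) f c l). Qed.

(* [f + g] is nonnegative with integrals bounded by [2 L]. *)
Lemma ex_int0inf_dominated (f g : R -> R) L : continuous_pos f -> continuous_pos g ->
  (forall t, 0 < t -> Rabs (f t) <= g t) -> is_int0inf g L -> exists l, is_int0inf f l.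
Proof.
  intros Hf Hg Hfg HL.
  assert (Hgp : forall t, 0 < t -> 0 <= g t)
    by (intros t Ht; specialize (Hfg t Ht); pose proof (Rabs_pos (f t)); lra).
  set (h t := f t + g t).
  assert (Hh : forall t, 0 < t -> 0 <= h t <= 2 * g t)
    by (intros t Ht; specialize (Hfg t Ht); apply Rabs_le_between in Hfg; unfold h; lra).
  assert (Hhc : continuous_pos h)
    by (intros t Ht; apply (continuous_plus (V := R_NormedModule) f g); auto).
  destruct (ex_int0inf_of_bounded_RInt h Hhc (fun t Ht => proj1 (Hh t Ht)) (2 * L)) as [lh Hlh].
  { intros u v Hu Huv. apply Rle_trans with (RInt (fun t => 2 * g t) u v).
    - apply RInt_le; [lra | apply ex_RInt_pos; auto; lra | |].
      + apply ex_RInt_pos; [|lra|lra]. intros t Ht.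
        apply (continuous_scal_r (V := R_NormedModule) 2 g), Hg, Ht.
      + intros t Ht. apply Hh. lra.
    - replace (RInt (fun t => 2 * g t) u v) with (2 * RInt g u v)
        by (symmetry; apply (RInt_scal (V := R_CompleteNormedModule)), ex_RInt_pos; auto; lra).
      pose proof (RInt_le_int0inf g Hg Hgp L u v HL Hu Huv). lra. }
  exists (lh - L). apply (is_int0inf_ext (fun t => h t - g t)); [intros; unfold h; ring|].
  now apply is_int0inf_minus.
Qed.

Lemma is_int0inf_comp_scal (f : R -> R) lam l :
  0 < lam -> is_int0inf f l -> is_int0inf (fun z => lam * f (lam * z)) l.
Proof.
  intros Hl H P HP. destruct (H P HP) as [Q Q' HQ HQ' HQQ'].
  apply (Filter_prod _ _ _ (fun a => Q (lam * a)) (fun b => Q' (lam * b))).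
  - destruct (at_right_0_elim _ HQ) as [d [Hd HQd]].
    apply (at_right_0_intro _ (d / lam)); [now apply Rdiv_lt_0_compat|].
    intros y [Hy0 Hy]. apply HQd. split; [nra|].
    apply (Rmult_lt_compat_l lam) in Hy; [|lra].
    now replace (lam * (d / lam)) with d in Hy by (field; lra).
  - destruct HQ' as [M HM]. exists (M / lam). intros y Hy. apply HM.
    apply (Rmult_lt_compat_l lam) in Hy; [|lra].
    now replace (lam * (M / lam)) with M in Hy by (field; lra).
  - intros a b Ha Hb. destruct (HQQ' _ _ Ha Hb) as [y [Hy1 Hy2]]. exists y. split; [|exact Hy2].
    simpl in *. pose proof (is_RInt_comp_lin f lam 0 a b y) as Hc.
    rewrite !Rplus_0_r in Hc. specialize (Hc Hy1).
    apply (is_RInt_ext (fun y0 => scal lam (f (lam * y0 + 0)))); [|exact Hc].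
    intros t _. now rewrite Rplus_0_r.
Qed.

(** * The Gamma function *)

Definition gamma_integrand (a t : R) : R := Rpower t (a - 1) * exp (- t).

Lemma gamma_integrand_continuous a : continuous_pos (gamma_integrand a).
Proof.
  intros t Ht. apply (ex_derive_continuous (V := R_NormedModule)).
  unfold gamma_integrand, Rpower. auto_derive. lra.
Qed.

Lemma gamma_integrand_pos a t : 0 < gamma_integrand a t.
Proof. apply Rmult_lt_0_compat; apply exp_pos. Qed.

Lemma gamma_integrand_nonneg a t : 0 < t -> 0 <= gamma_integrand a t.
Proof. intros _. left. apply gamma_integrand_pos. Qed.

Lemma gamma_integrand_S a y : 0 < y -> gamma_integrand (a + 1) y = y * gamma_integrand a y.
Proof.
  intro Hy. unfold gamma_integrand. replace (a + 1 - 1) with ((a - 1) + 1) by ring.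
  rewrite Rpower_plus, Rpower_1 by assumption. ring.
Qed.

Lemma ln_le_linear c : exists K, forall t, 1 <= t -> c * ln t <= t / 2 + K.
Proof.
  set (d := Rabs c + 1).
  assert (Hd : 0 < d) by (unfold d; pose proof (Rabs_pos c); lra).
  exists (d * (ln (2 * d) - 1)). intros t Ht.
  assert (Hl : 0 <= ln t) by (rewrite <- ln_1; apply ln_le; lra).
  assert (H1 : c * ln t <= d * ln t)
    by (apply Rmult_le_compat_r; [|pose proof (Rle_abs c); unfold d]; lra).
  assert (H2 : ln t = ln (t / (2 * d)) + ln (2 * d))
    by (rewrite <- ln_mult by (try apply Rdiv_lt_0_compat; lra); f_equal; field; lra).
  (* ln y <= y - 1 at y = t / (2 d) *)
  pose proof (exp_ineq1_le (ln (t / (2 * d)))) as H3.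
  rewrite exp_ln in H3 by (apply Rdiv_lt_0_compat; lra).
  assert (H4 : d * ln t <= d * (t / (2 * d) - 1 + ln (2 * d))) by (apply Rmult_le_compat_l; lra).
  replace (d * (t / (2 * d) - 1 + ln (2 * d))) with (t / 2 + d * (ln (2 * d) - 1)) in H4
    by (field; lra).
  lra.
Qed.

Lemma gamma_integrand_tail a :
  exists E, 0 < E /\ forall t, 1 <= t -> gamma_integrand a t <= E * exp (- t / 2).
Proof.
  destruct (ln_le_linear (a - 1)) as [K HK]. exists (exp K). split; [apply exp_pos|].
  intros t Ht. unfold gamma_integrand, Rpower. rewrite <- !exp_plus.
  apply exp_le_compat, Rle_trans with (t / 2 + K - t); [specialize (HK t Ht); lra | lra].
Qed.

Lemma RInt_Rpower_le a u : 0 < a -> 0 < u -> u <= 1 -> RInt (fun t => Rpower t (a - 1)) u 1 <= / a.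
Proof.
  intros Ha Hu Hu1.
  assert (H : is_RInt (fun t => Rpower t (a - 1)) u 1 (minus (Rpower 1 a / a) (Rpower u a / a))).
  { apply (is_RInt_derive (V := R_CompleteNormedModule) (fun t => Rpower t a / a));
      intros x Hx; rewrite Rmin_left in Hx by lra; unfold Rpower.
    - auto_derive; [lra|].
      replace ((a - 1) * ln x) with (a * ln x + - ln x) by ring.
      rewrite exp_plus, exp_Ropp, exp_ln by lra. field. lra.
    - apply (ex_derive_continuous (V := R_NormedModule)). auto_derive. lra. }
  rewrite (is_RInt_unique (V := R_CompleteNormedModule) _ _ _ _ H).
  change (Rpower 1 a / a - Rpower u a / a <= / a).
  unfold Rpower. rewrite ln_1, Rmult_0_r, exp_0.
  pose proof (exp_pos (a * ln u)). pose proof (Rinv_0_lt_compat a Ha). unfold Rdiv. nra.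
Qed.

Lemma RInt_exp_half_le v : 1 <= v -> RInt (fun t => exp (- t / 2)) 1 v <= 2.
Proof.
  intro Hv.
  assert (H : is_RInt (fun t => exp (- t / 2)) 1 v (minus (-2 * exp (- v / 2)) (-2 * exp (- 1 / 2)))).
  { apply (is_RInt_derive (V := R_CompleteNormedModule) (fun t => -2 * exp (- t / 2))); intros x Hx.
    - auto_derive; [exact I | unfold Rdiv; field].
    - apply (ex_derive_continuous (V := R_NormedModule)). auto_derive. exact I. }
  rewrite (is_RInt_unique (V := R_CompleteNormedModule) _ _ _ _ H).
  change (-2 * exp (- v / 2) - -2 * exp (- 1 / 2) <= 2).
  pose proof (exp_pos (- v / 2)). pose proof (exp_le_1 (- 1 / 2) ltac:(lra)). lra.
Qed.

(* Split at 1: near 0 the integrand is at most t^(a-1), near +oo at most E exp(-t/2). *)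
Lemma is_int0inf_Gamma a : 0 < a -> is_int0inf (gamma_integrand a) (Gamma a).
Proof.
  intro Ha. destruct (gamma_integrand_tail a) as [E [HE HEt]].
  pose proof (gamma_integrand_continuous a) as Hc.
  destruct (ex_int0inf_of_bounded_RInt (gamma_integrand a) Hc (gamma_integrand_nonneg a)
              (/ a + E * 2)) as [l Hl].
  - intros u v Hu Huv.
    set (u' := Rmin u 1). set (v' := Rmax v 1).
    assert (Hu' : 0 < u' <= u /\ u' <= 1)
      by (pose proof (Rmin_l u 1); pose proof (Rmin_r u 1); pose proof (Rmin_glb_lt u 1 0); unfold u'; lra).
    assert (Hv' : v <= v' /\ 1 <= v') by (unfold v'; split; [apply Rmax_l | apply Rmax_r]).
    apply Rle_trans with (RInt (gamma_integrand a) u' v');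
      [apply RInt_le_superinterval; auto; [apply gamma_integrand_nonneg | lra..]|].
    rewrite (RInt_Chasles_pos _ u' 1 v') by (auto; lra).
    apply Rplus_le_compat.
    + apply Rle_trans with (RInt (fun t => Rpower t (a - 1)) u' 1); [|apply RInt_Rpower_le; lra].
      apply RInt_le; [lra | apply ex_RInt_pos; auto; lra | |].
      * apply ex_RInt_pos; [|lra|lra]. intros t Ht. apply (ex_derive_continuous (V := R_NormedModule)).
        unfold Rpower. auto_derive. lra.
      * intros x Hx. unfold gamma_integrand. pose proof (exp_pos ((a - 1) * ln x)).
        pose proof (exp_le_1 (- x) ltac:(lra)). unfold Rpower. nra.
    + apply Rle_trans with (RInt (fun t => E * exp (- t / 2)) 1 v').
      * apply RInt_le; [lra | apply ex_RInt_pos; auto; lra | |].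
        -- apply ex_RInt_pos; [|lra|lra]. intros t Ht.
           apply (ex_derive_continuous (V := R_NormedModule)). auto_derive. exact I.
        -- intros x Hx. apply HEt. lra.
      * replace (RInt (fun t => E * exp (- t / 2)) 1 v') with (E * RInt (fun t => exp (- t / 2)) 1 v').
        -- pose proof (RInt_exp_half_le v' ltac:(lra)). nra.
        -- symmetry. apply (RInt_scal (V := R_CompleteNormedModule) (fun t => exp (- t / 2))).
           apply ex_RInt_continuous. intros z _. apply (ex_derive_continuous (V := R_NormedModule)).
           auto_derive. exact I.
  - replace (Gamma a) with l; [exact Hl|]. symmetry. exact (int0inf_unique _ _ Hl).
Qed.

Lemma Gamma_pos a : 0 < a -> 0 < Gamma a.
Proof.
  intro Ha. apply Rlt_le_trans with (RInt (gamma_integrand a) 1 2).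
  - apply RInt_gt_0; [lra | intros; apply gamma_integrand_pos |].
    intros x Hx. apply gamma_integrand_continuous. lra.
  - apply (RInt_le_int0inf (gamma_integrand a)); try lra.
    + apply gamma_integrand_continuous.
    + apply gamma_integrand_nonneg.
    + now apply is_int0inf_Gamma.
Qed.

Lemma filterlim_Rpower_exp_0 a : 0 < a ->
  filterlim (fun t => - Rpower t a * exp (- t)) (at_right 0) (locally 0).
Proof.
  intro Ha. apply filterlim_locally. intros [eps He].
  apply (at_right_0_intro _ (exp (ln eps / a))); [apply exp_pos|].
  intros t [Ht0 Ht]. apply ball_R_iff. simpl.
  assert (H1 : ln t < ln eps / a) by (rewrite <- (ln_exp (ln eps / a)); now apply ln_increasing).
  assert (H2 : exp (a * ln t) < eps).
  { rewrite <- (exp_ln eps) by assumption. apply exp_increasing.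
    apply (Rmult_lt_compat_l a) in H1; [|assumption].
    replace (a * (ln eps / a)) with (ln eps) in H1 by (field; lra). exact H1. }
  pose proof (exp_le_1 (- t) ltac:(lra)). pose proof (exp_pos (- t)). pose proof (exp_pos (a * ln t)).
  unfold Rpower. rewrite Rminus_0_r, Ropp_mult_distr_l_reverse, Rabs_Ropp, Rabs_pos_eq by nra. nra.
Qed.

Lemma filterlim_Rpower_exp_pinfty a :
  filterlim (fun t => - Rpower t a * exp (- t)) (Rbar_locally p_infty) (locally 0).
Proof.
  apply filterlim_locally. intros [eps He].
  destruct (ln_le_linear a) as [K HK].
  exists (Rmax 1 (2 * (K - ln eps))). intros t Ht. apply ball_R_iff. simpl.
  pose proof (Rmax_l 1 (2 * (K - ln eps))). pose proof (Rmax_r 1 (2 * (K - ln eps))).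
  specialize (HK t ltac:(lra)).
  unfold Rpower. rewrite Rminus_0_r, Ropp_mult_distr_l_reverse, Rabs_Ropp, <- exp_plus.
  rewrite Rabs_pos_eq by (left; apply exp_pos).
  rewrite <- (exp_ln eps) by assumption. apply exp_increasing. lra.
Qed.

(* Integration by parts: -t^a e^(-t) is a primitive of t^a e^(-t) - a t^(a-1) e^(-t). *)
Lemma Gamma_S a : 0 < a -> Gamma (a + 1) = a * Gamma a.
Proof.
  intro Ha.
  set (f t := - Rpower t a * exp (- t)).
  assert (Hd : forall t, 0 < t -> is_derive f t (gamma_integrand (a + 1) t - a * gamma_integrand a t)).
  { intros t Ht. unfold f, gamma_integrand, Rpower. auto_derive; [lra|].
    replace (a + 1 - 1) with a by ring.
    replace ((a - 1) * ln t) with (a * ln t + - ln t) by ring.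
    rewrite (exp_plus (a * ln t)), (exp_Ropp (ln t)), (exp_ln t) by lra. field. lra. }
  assert (HI : is_int0inf (Derive f) (0 - 0)).
  { unfold is_int0inf. apply is_RInt_gen_Derive; [| |now apply filterlim_Rpower_exp_0 | apply filterlim_Rpower_exp_pinfty];
      apply filter_prod_int0inf; intros u v Hu Hv x Hx; simpl in Hx;
      assert (Hx0 : 0 < x) by (pose proof (Rmin_glb_lt u v 0); lra).
    - eexists. now apply Hd.
    - apply (continuous_ext_loc _ (fun t => gamma_integrand (a + 1) t - a * gamma_integrand a t)).
      + exists (mkposreal (x / 2) ltac:(lra)). intros y Hy. change (Rabs (y - x) < x / 2) in Hy.
        symmetry. apply is_derive_unique, Hd. apply Rabs_lt_between in Hy. lra.
      + apply (continuous_minus (V := R_NormedModule)); [now apply gamma_integrand_continuous|].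
        apply (continuous_scal_r (V := R_NormedModule) a). now apply gamma_integrand_continuous. }
  assert (H0 : is_int0inf (fun t => gamma_integrand (a + 1) t - a * gamma_integrand a t) 0).
  { apply (is_int0inf_ext (Derive f)); [intros; now apply is_derive_unique, Hd|].
    apply (is_int0inf_eq _ (0 - 0)); [ring | exact HI]. }
  assert (H1 : is_int0inf (fun t => gamma_integrand (a + 1) t - a * gamma_integrand a t)
                 (Gamma (a + 1) - a * Gamma a))
    by (apply is_int0inf_minus, is_int0inf_scal; apply is_int0inf_Gamma; lra).
  apply int0inf_unique in H0. apply int0inf_unique in H1. lra.
Qed.

(** * The Gamma kernel [I_kernel] *)

Definition gamma_kernel_moment2 (beta eta : R) (k : nat) (x : R) : R :=
  (INR k / eta - x) * (INR k / eta - x) + INR k / (beta * eta * eta).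

Section GammaKernel.
Variables (beta eta : R) (k : nat).
Hypotheses (Hbeta : 0 < beta) (Heta : 0 < eta) (Hk : (1 <= k)%nat).

(* [I_kernel beta eta k] is the density of the Gamma law with shape [c] and rate [lam]. *)
Let c := INR k * beta.
Let lam := eta * beta.

Let c_pos : 0 < c.
Proof. apply Rmult_lt_0_compat; [apply lt_0_INR; lia | assumption]. Qed.

Let lam_pos : 0 < lam.
Proof. now apply Rmult_lt_0_compat. Qed.

Let Gamma_c_pos : 0 < Gamma c.
Proof. exact (Gamma_pos c c_pos). Qed.

Lemma I_kernel_gamma_integrand z :
  I_kernel beta eta k z = / Gamma c * (lam * gamma_integrand c (lam * z)).
Proof.
  unfold I_kernel, gamma_integrand. fold c. fold lam.
  replace (- eta * beta * z) with (- (lam * z)) by (unfold lam; ring).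
  replace (eta * beta * z) with (lam * z) by (unfold lam; ring).
  field. lra.
Qed.

Lemma I_kernel_nonneg z : 0 <= I_kernel beta eta k z.
Proof.
  rewrite I_kernel_gamma_integrand. apply Rmult_le_pos; [left; now apply Rinv_0_lt_compat|].
  apply Rmult_le_pos; [lra | left; apply gamma_integrand_pos].
Qed.

Lemma I_kernel_continuous : continuous_pos (I_kernel beta eta k).
Proof.
  intros t Ht. apply (continuous_ext_loc _ (fun z => / Gamma c * (lam * gamma_integrand c (lam * z)))).
  - exists (mkposreal 1 Rlt_0_1). intros y _. symmetry. apply I_kernel_gamma_integrand.
  - apply (ex_derive_continuous (V := R_NormedModule)). unfold gamma_integrand, Rpower.
    auto_derive. pose proof (Rmult_lt_0_compat lam t lam_pos Ht). lra.
Qed.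

(* The moments of order 0, 1, 2 reduce to Gamma(c), Gamma(c + 1), Gamma(c + 2) by scaling. *)
Lemma is_int0inf_I_kernel : is_int0inf (I_kernel beta eta k) 1.
Proof.
  apply (is_int0inf_ext (fun z => / Gamma c * (lam * gamma_integrand c (lam * z))));
    [intros; symmetry; apply I_kernel_gamma_integrand|].
  apply (is_int0inf_eq _ (/ Gamma c * Gamma c)); [field; lra|].
  apply is_int0inf_scal, is_int0inf_comp_scal, is_int0inf_Gamma; assumption.
Qed.

Lemma is_int0inf_I_kernel_mean : is_int0inf (fun z => I_kernel beta eta k z * z) (INR k / eta).
Proof.
  apply (is_int0inf_ext (fun z => / (Gamma c * lam) * (lam * gamma_integrand (c + 1) (lam * z)))).
  { intros z Hz. rewrite I_kernel_gamma_integrand, gamma_integrand_S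
      by (now apply Rmult_lt_0_compat). field. lra. }
  apply (is_int0inf_eq _ (/ (Gamma c * lam) * Gamma (c + 1))).
  { rewrite Gamma_S by assumption. unfold c, lam in *. field. repeat split; lra. }
  apply is_int0inf_scal, is_int0inf_comp_scal, is_int0inf_Gamma; lra.
Qed.

Lemma is_int0inf_I_kernel_second_moment :
  is_int0inf (fun z => I_kernel beta eta k z * (z * z))
    (INR k / eta * (INR k / eta) + INR k / (beta * eta * eta)).
Proof.
  apply (is_int0inf_ext
           (fun z => / (Gamma c * lam * lam) * (lam * gamma_integrand (c + 1 + 1) (lam * z)))).
  { intros z Hz. pose proof (Rmult_lt_0_compat lam z lam_pos Hz).
    rewrite I_kernel_gamma_integrand, !gamma_integrand_S by assumption. field. lra. }
  apply (is_int0inf_eq _ (/ (Gamma c * lam * lam) * Gamma (c + 1 + 1))).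
  { rewrite Gamma_S, Gamma_S by lra. unfold c, lam in *. field. repeat split; lra. }
  apply is_int0inf_scal, is_int0inf_comp_scal, is_int0inf_Gamma; lra.
Qed.

Lemma is_int0inf_I_kernel_moment2 x :
  is_int0inf (fun z => I_kernel beta eta k z * ((z - x) * (z - x))) (gamma_kernel_moment2 beta eta k x).
Proof.
  apply (is_int0inf_ext (fun z => I_kernel beta eta k z * (z * z) - 2 * x * (I_kernel beta eta k z * z)
                                  + x * x * I_kernel beta eta k z)); [intros; ring|].
  apply (is_int0inf_eq _ (INR k / eta * (INR k / eta) + INR k / (beta * eta * eta)
                          - 2 * x * (INR k / eta) + x * x * 1)); [unfold gamma_kernel_moment2; ring|].
  apply is_int0inf_plus; [apply is_int0inf_minus|].
  - apply is_int0inf_I_kernel_second_moment.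
  - apply is_int0inf_scal, is_int0inf_I_kernel_mean.
  - apply is_int0inf_scal, is_int0inf_I_kernel.
Qed.

Lemma int0inf_I_kernel_error (Phi : R -> R) B x eps C :
  continuous_pos Phi -> (forall z, 0 < z -> Rabs (Phi z) <= B) ->
  (forall z, 0 < z -> Rabs (Phi z - Phi x) <= eps + C * ((z - x) * (z - x))) ->
  Rabs (int0inf (fun z => I_kernel beta eta k z * Phi z) - Phi x)
  <= eps + C * gamma_kernel_moment2 beta eta k x.
Proof.
  intros HPhi HB Hmod.
  destruct (ex_int0inf_dominated (fun z => I_kernel beta eta k z * Phi z)
              (fun z => B * I_kernel beta eta k z) (B * 1)) as [l Hl].
  - intros t Ht. apply (continuous_mult (K := R_AbsRing)); [now apply I_kernel_continuous | now apply HPhi].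
  - intros t Ht. apply (continuous_scal_r (V := R_NormedModule) B). now apply I_kernel_continuous.
  - intros t Ht. rewrite Rabs_mult, (Rabs_pos_eq _ (I_kernel_nonneg t)), Rmult_comm.
    apply Rmult_le_compat_r; [apply I_kernel_nonneg | now apply HB].
  - apply is_int0inf_scal, is_int0inf_I_kernel.
  - rewrite (int0inf_unique _ _ Hl).
    replace (l - Phi x) with (l - Phi x * 1) by ring.
    replace (eps + C * gamma_kernel_moment2 beta eta k x)
      with (eps * 1 + C * gamma_kernel_moment2 beta eta k x) by ring.
    assert (H1 : is_int0inf (fun z => I_kernel beta eta k z * Phi z - Phi x * I_kernel beta eta k z)
                   (l - Phi x * 1))
      by (apply is_int0inf_minus; [exact Hl | apply is_int0inf_scal, is_int0inf_I_kernel]).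
    assert (H2 : is_int0inf
                   (fun z => eps * I_kernel beta eta k z + C * (I_kernel beta eta k z * ((z - x) * (z - x))))
                   (eps * 1 + C * gamma_kernel_moment2 beta eta k x))
      by (apply is_int0inf_plus; apply is_int0inf_scal;
            [apply is_int0inf_I_kernel | apply is_int0inf_I_kernel_moment2]).
    refine (RInt_gen_norm (V := R_CompleteNormedModule) (Fa := at_right 0) (Fb := Rbar_locally p_infty)
              _ _ _ _ _ _ H1 H2).
    + apply filter_prod_int0inf. simpl. intros; lra.
    + apply filter_prod_int0inf. intros a b Ha Hb z Hz. simpl in Hz.
      change (Rabs (I_kernel beta eta k z * Phi z - Phi x * I_kernel beta eta k z)
              <= eps * I_kernel beta eta k z + C * (I_kernel beta eta k z * ((z - x) * (z - x)))).
      replace (I_kernel beta eta k z * Phi z - Phi x * I_kernel beta eta k z)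
        with (I_kernel beta eta k z * (Phi z - Phi x)) by ring.
      replace (eps * I_kernel beta eta k z + C * (I_kernel beta eta k z * ((z - x) * (z - x))))
        with (I_kernel beta eta k z * (eps + C * ((z - x) * (z - x)))) by ring.
      rewrite Rabs_mult, Rabs_pos_eq by apply I_kernel_nonneg.
      apply Rmult_le_compat_l; [apply I_kernel_nonneg | apply Hmod; lra].
Qed.

End GammaKernel.

(** * A quadratic modulus of continuity *)

Section QuadraticModulus.
Variable Phi : R -> R.
Hypothesis Phi_cont : forall x, 0 <= x ->
  filterlim Phi (within (fun y => 0 <= y) (locally x)) (locally (Phi x)).

Lemma continuous_pos_of_within : continuous_pos Phi.
Proof.
  intros t Ht P HP. destruct (Phi_cont t (Rlt_le _ _ Ht) P HP) as [e He].
  assert (Hd : 0 < Rmin e t) by (apply Rmin_glb_lt; [apply cond_pos | exact Ht]).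
  exists (mkposreal _ Hd). intros z Hz. change (Rabs (z - t) < Rmin e t) in Hz.
  pose proof (Rmin_l e t). pose proof (Rmin_r e t). apply Rabs_lt_between in Hz.
  apply He; [apply ball_R_iff, Rabs_lt_between|]; lra.
Qed.

Lemma continuity_pt_clamp y : continuity_pt (fun y => Phi (Rmax 0 y)) y.
Proof.
  apply continuity_pt_filterlim.
  apply (filterlim_comp _ _ _ (Rmax 0) Phi _ (within (fun y => 0 <= y) (locally (Rmax 0 y))));
    [|apply Phi_cont, Rmax_l].
  intros P [eps HP]. exists eps. intros z Hz. apply HP; [|apply Rmax_l].
  apply ball_R_iff. apply ball_R_iff in Hz. apply Rle_lt_trans with (Rabs (z - y)); [|exact Hz].
  unfold Rmax. destruct (Rle_dec 0 z), (Rle_dec 0 y); unfold Rabs; repeat destruct Rcase_abs; lra.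
Qed.

(* Uniform continuity on [0, X + 1] handles [|z - x| < d]; boundedness handles [|z - x| >= d]. *)
Lemma quadratic_modulus B X eps : (forall x, 0 <= x -> Rabs (Phi x) <= B) -> 0 < eps ->
  exists C, 0 <= C /\ forall x z, 0 <= x <= X -> 0 <= z ->
    Rabs (Phi z - Phi x) <= eps + C * ((z - x) * (z - x)).
Proof.
  intros HB Heps.
  destruct (Heine_cor2 (a := 0) (b := X + 1) (fun y _ => continuity_pt_clamp y) (mkposreal eps Heps))
    as [[d Hd] Hdelta]. simpl in Hdelta.
  set (d' := Rmin d 1).
  assert (Hd' : 0 < d' <= d /\ d' <= 1)
    by (pose proof (Rmin_l d 1); pose proof (Rmin_r d 1); pose proof (Rmin_glb_lt d 1 0); unfold d'; lra).
  assert (HB0 : 0 <= B) by (apply Rle_trans with (Rabs (Phi 0)); [apply Rabs_pos | apply HB; lra]).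
  assert (Hsq : forall u, 0 <= u * u) by (intro u; apply Rle_0_sqr).
  exists (2 * B / (d' * d')). split; [apply Rdiv_le_0_compat; nra|].
  intros x z Hx Hz.
  assert (HC : 0 <= 2 * B / (d' * d') * ((z - x) * (z - x)))
    by (apply Rmult_le_pos; [apply Rdiv_le_0_compat; nra | apply Hsq]).
  destruct (Rlt_dec (Rabs (z - x)) d') as [Hlt | Hge].
  - apply Rabs_lt_between in Hlt as Hlt'.
    pose proof (Hdelta z x ltac:(lra) ltac:(lra) ltac:(lra)) as H.
    rewrite !Rmax_right in H by lra. lra.
  - apply Rnot_lt_le in Hge.
    assert (Hdz : d' * d' <= (z - x) * (z - x))
      by (rewrite <- (Rabs_pos_eq ((z - x) * (z - x))), Rabs_mult by apply Hsq; apply Rmult_le_compat; lra).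
    assert (H2B : Rabs (Phi z - Phi x) <= 2 * B).
    { unfold Rminus. apply Rle_trans with (Rabs (Phi z) + Rabs (- Phi x)); [apply Rabs_triang|].
      rewrite Rabs_Ropp. pose proof (HB z Hz). pose proof (HB x ltac:(lra)). lra. }
    assert (2 * B <= 2 * B / (d' * d') * ((z - x) * (z - x))).
    { replace (2 * B / (d' * d') * ((z - x) * (z - x))) with (2 * B * ((z - x) * (z - x) / (d' * d')))
        by (field; lra).
      rewrite <- (Rmult_1_r (2 * B)) at 1. apply Rmult_le_compat_l; [lra|].
      apply (Rmult_le_reg_r (d' * d')); [nra|]. unfold Rdiv. rewrite Rmult_assoc, Rinv_l by nra. lra. }
    lra.
Qed.

End QuadraticModulus.

Lemma is_series_average_error (a J v : nat -> R) (y V : R) :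
  (forall k, 0 <= a k) -> is_series a 1 -> (forall k, Rabs (J k - y) <= v k) ->
  is_series (fun k => a k * v k) V ->
  exists L : R, is_series (fun k => a k * J k) L /\ Rabs (L - y) <= V.
Proof.
  intros Ha Ha1 HJ Hv.
  set (u k := a k * (J k - y)).
  assert (Hu : forall k, Rabs (u k) <= a k * v k)
    by (intro k; unfold u; rewrite Rabs_mult, Rabs_pos_eq by apply Ha; apply Rmult_le_compat_l; auto).
  assert (Hexu : ex_series (fun k => Rabs (u k))).
  { apply (ex_series_le (V := R_CompleteNormedModule) _ (fun k => a k * v k)); [|now exists V].
    intro k. change (Rabs (Rabs (u k)) <= a k * v k). rewrite Rabs_Rabsolu. apply Hu. }
  exists (Series u + y). split.
  - apply (is_series_ext (fun k => u k + y * a k)); [intro k; unfold u; eq_R; ring|].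
    apply (is_series_eq_sum _ (Series u + y * 1)); [ring|].
    apply is_series_plus_R; [apply Series_correct, ex_series_Rabs, Hexu | now apply is_series_scal_R].
  - replace (Series u + y - y) with (Series u) by ring.
    apply Rle_trans with (Series (fun k => Rabs (u k))); [now apply Series_Rabs|].
    rewrite <- (is_series_unique _ _ Hv). apply Series_le; [|now exists V].
    intro k. split; [apply Rabs_pos | apply Hu].
Qed.

Definition operator_moment2 (alpha beta eta x : R) : R :=
  ((3 + / beta) * x + (alpha + 1) * (alpha + 3) / eta + (alpha + 1) / (beta * eta)) / eta.

Lemma is_series_p_eta_moment2 alpha beta eta x :
  -1 < alpha -> 0 < beta -> 0 < eta -> 0 <= x ->
  is_series (fun k => p_eta alpha eta k x * gamma_kernel_moment2 beta eta k x)
    (operator_moment2 alpha beta eta x).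
Proof.
  intros Halpha Hbeta Heta Hx.
  set (s := eta * x / 2).
  assert (Hs : 0 <= s) by (unfold s; apply Rmult_le_pos; [apply Rmult_le_pos|]; lra).
  set (a := poisson_negbin_pmf alpha s).
  apply (is_series_ext (fun k => / (eta * eta) * (INR k * INR k * a k)
           + (/ (beta * eta * eta) - 2 * x / eta) * (INR k * a k) + x * x * a k)).
  { intro k. rewrite p_eta_poisson_negbin. unfold gamma_kernel_moment2, a, s. eq_R. field. split; lra. }
  apply (is_series_eq_sum _
    (/ (eta * eta) * (4 * s * s + (4 * alpha + 10) * s + (alpha + 1) * (alpha + 3))
     + (/ (beta * eta * eta) - 2 * x / eta) * (2 * s + alpha + 1) + x * x * 1)).
  { unfold operator_moment2, s. field. lra. }
  apply is_series_plus_R; [apply is_series_plus_R|]; apply is_series_scal_R.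
  - now apply is_series_poisson_negbin_pmf_second_moment.
  - now apply is_series_poisson_negbin_pmf_mean.
  - now apply is_series_poisson_negbin_pmf.
Qed.

Lemma operator_moment2_le alpha beta eta x X :
  -1 < alpha -> 0 < beta -> 1 <= eta -> 0 <= x <= X ->
  operator_moment2 alpha beta eta x
  <= ((3 + / beta) * X + (alpha + 1) * (alpha + 3) + (alpha + 1) / beta) / eta.
Proof.
  intros Halpha Hbeta Heta Hx. unfold operator_moment2, Rdiv.
  apply Rmult_le_compat_r; [left; apply Rinv_0_lt_compat; lra|].
  pose proof (Rinv_0_lt_compat beta Hbeta) as Hb.
  assert (He : 0 < / eta <= 1)
    by (split; [apply Rinv_0_lt_compat | rewrite <- Rinv_1; apply Rinv_le_contravar]; lra).
  rewrite Rinv_mult, <- Rmult_assoc.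
  apply Rplus_le_compat; [apply Rplus_le_compat|].
  - apply Rmult_le_compat_l; lra.
  - rewrite <- (Rmult_1_r ((alpha + 1) * (alpha + 3))) at 2. apply Rmult_le_compat_l; nra.
  - rewrite <- (Rmult_1_r ((alpha + 1) * / beta)) at 2. apply Rmult_le_compat_l; nra.
Qed.

Lemma R_op_error alpha beta eta Phi B eps C x :
  -1 < alpha -> 0 < beta -> 0 < eta -> 0 <= x ->
  continuous_pos Phi -> (forall z, 0 <= z -> Rabs (Phi z) <= B) ->
  (forall z, 0 <= z -> Rabs (Phi z - Phi x) <= eps + C * ((z - x) * (z - x))) ->
  Rabs (R_op alpha beta eta Phi x - Phi x) <= eps + C * operator_moment2 alpha beta eta x.
Proof.
  intros Halpha Hbeta Heta Hx HPhi HB Hmod.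
  set (a k := p_eta alpha eta k x).
  set (J k := match k with
              | O => Phi 0
              | S j => int0inf (fun z => I_kernel beta eta (S j) z * Phi z)
              end).
  assert (Ha : forall k, 0 <= a k)
    by (intro k; unfold a; rewrite p_eta_poisson_negbin;
        apply poisson_negbin_pmf_nonneg; [|apply Rmult_le_pos; [apply Rmult_le_pos|]]; lra).
  assert (Ha1 : is_series a 1).
  { apply (is_series_ext (poisson_negbin_pmf alpha (eta * x / 2))); [intro; symmetry; apply p_eta_poisson_negbin|].
    apply is_series_poisson_negbin_pmf; [|apply Rmult_le_pos; [apply Rmult_le_pos|]]; lra. }
  destruct (is_series_average_error a J (fun k => eps + C * gamma_kernel_moment2 beta eta k x) (Phi x)
              (eps + C * operator_moment2 alpha beta eta x) Ha Ha1) as [L [HL HLerr]].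
  - intros [|j]; simpl J.
    + unfold gamma_kernel_moment2. simpl INR.
      replace ((0 / eta - x) * (0 / eta - x) + 0 / (beta * eta * eta)) with ((0 - x) * (0 - x)) by (field; lra).
      apply Hmod. lra.
    + apply (int0inf_I_kernel_error beta eta (S j) Hbeta Heta ltac:(lia) Phi B); auto.
      intros z Hz. apply HB. lra.
      intros z Hz. apply Hmod. lra.
  - apply (is_series_ext (fun k => eps * a k + C * (a k * gamma_kernel_moment2 beta eta k x)));
      [intro; eq_R; ring|].
    apply (is_series_eq_sum _ (eps * 1 + C * operator_moment2 alpha beta eta x)); [ring|].
    apply is_series_plus_R; apply is_series_scal_R; [exact Ha1 | now apply is_series_p_eta_moment2].
  - apply is_series_pred_R in HL.
    assert (Hseries : Series (fun j => p_eta alpha eta (S j) x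
                                       * int0inf (fun z => I_kernel beta eta (S j) z * Phi z))
                      = L - a 0%nat * J 0%nat) by exact (is_series_unique _ _ HL).
    unfold R_op. rewrite Hseries. unfold a, J.
    replace (p_eta alpha eta 0 x * Phi 0 + (L - p_eta alpha eta 0 x * Phi 0)) with L by ring.
    exact HLerr.
Qed.

Theorem mainTheorem4 (alpha beta : R) (Halpha : -1 < alpha) (Hbeta : 0 < beta)
  (Phi : R -> R)
  (Hcont : forall x, 0 <= x ->
     filterlim Phi (within (fun y => 0 <= y) (locally x)) (locally (Phi x)))
  (Hbdd : exists B, forall x, 0 <= x -> Rabs (Phi x) <= B) :
  forall K : R -> Prop, compact K -> (forall x, K x -> 0 <= x) ->
  forall eps, 0 < eps ->
  exists M, forall eta, M < eta -> forall x, K x ->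
    Rabs (R_op alpha beta eta Phi x - Phi x) < eps.
Proof.
  intros K HK HK0 eps Heps.
  destruct Hbdd as [B HB].
  destruct (compact_P1 K HK) as [m [X HX]].
  destruct (quadratic_modulus Phi Hcont B X (eps / 2) HB ltac:(lra)) as [C [HC Hmod]].
  set (A := (3 + / beta) * X + (alpha + 1) * (alpha + 3) + (alpha + 1) / beta).
  exists (Rmax 1 (2 * C * A / eps)).
  intros eta Heta x Hx.
  pose proof (Rmax_l 1 (2 * C * A / eps)). pose proof (Rmax_r 1 (2 * C * A / eps)).
  assert (Hx' : 0 <= x <= X) by (split; [now apply HK0 | now apply HX]).
  pose proof (R_op_error alpha beta eta Phi B (eps / 2) C x Halpha Hbeta ltac:(lra) (proj1 Hx')
                (continuous_pos_of_within Phi Hcont) HB (fun z Hz => Hmod x z Hx' Hz)) as Herr.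
  pose proof (operator_moment2_le alpha beta eta x X Halpha Hbeta ltac:(lra) Hx') as HT.
  fold A in HT.
  assert (HCA : 2 * C * A / eps < eta) by lra.
  assert (C * (A / eta) < eps / 2).
  { apply (Rmult_lt_compat_r eps) in HCA; [|lra].
    replace (2 * C * A / eps * eps) with (2 * (C * A)) in HCA by (field; lra).
    replace (C * (A / eta)) with (C * A / eta) by (field; lra).
    apply (Rmult_lt_reg_r eta); [lra|]. replace (C * A / eta * eta) with (C * A) by (field; lra). lra. }
  pose proof (Rmult_le_compat_l C _ _ HC HT). lra.
Qed.
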